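(* For every finite field $\mathbb{F}_q$, the unit-graph on $\operatorname{Mat}_2(\mathbb{F}_q)$ is a strongly regular graph with parameters $(q^4,\; q^4-q^3-q^2+q,\; q^4-2q^3-q^2+3q,\; q^4-2q^3+q)$.
   Context: The unit-graph on $\operatorname{Mat}_2(\mathbb{F}_q)$ is the graph with vertex set $\operatorname{Mat}_2(\mathbb{F}_q)$ in which $A$ and $B$ are adjacent iff $B - A \in \operatorname{GL}_2(\mathbb{F}_q)$. A non-empty, non-complete regular graph is strongly regular with parameters $(n,k,a,c)$ if it has $n$ vertices, is $k$-regular, every pair of distinct adjacent vertices has exactly $a$ common neighbours, and every pair of distinct nonadjacent vertices has exactly $c$ common neighbours. *)

From HB Require Import structures.
From mathcomp Require Import all_boot all_order all_algebra all_field.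
Set Implicit Arguments. Unset Strict Implicit. Unset Printing Implicit Defensive.
Import GRing.Theory Num.Theory.
Local Open Scope ring_scope.

(* Unit-graph on 'M[F]_2 : A ~ B iff B - A is invertible.
   (Irreflexive automatically since 0 is not invertible; we keep the
   literal definition from the paper.) *)
Definition unit_graph (F : finFieldType) : rel 'M[F]_2 :=
  fun A B => (B - A) \in unitmx.

Definition strongly_regular (T : finType) (e : rel T) (n k a c : nat) : Prop :=
  [/\ #|T| = n,
      (exists x y, e x y) &
      (exists x y, x != y /\ ~~ e x y)] /\
  [/\ (forall x, #|[set y | e x y]| = k),
      (forall x y, x != y -> e x y -> #|[set z | e x z && e y z]| = a) &
      (forall x y, x != y -> ~~ e x y -> #|[set z | e x z && e y z]| = c)].

From HB Require Import structures.
From mathcomp Require Import all_boot all_order all_algebra all_field.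
From mathcomp Require Import ring zify.
Set Implicit Arguments.
Unset Strict Implicit.
Unset Printing Implicit Defensive.
Import GRing.Theory Num.Theory.
Local Open Scope ring_scope.

(** Translations are automorphisms of the unit graph, so every vertex has
    degree |GL_2(F_q)|, and two vertices x, y have as many common neighbours
    as there are units w with w - D a unit, where D = y - x.  That number is
    invariant under D |-> P D Q for invertible P, Q, hence depends only on
    rank D: it is 2 for adjacent and 1 for distinct non-adjacent vertices, so
    one may take D = 1 or D = E_11 = pid_mx 1.  By inclusion-exclusion it equals
    2 |GL_2| - q^4 plus the number of singular w with w - D singular; for
    D = 1 these are the singular w of trace 1, for D = E_11 the singular w
    with w_22 = 0, and both are counted from det w = w_11 w_22 - w_12 w_21. *)

Lemma card_preim_inj (T : finType) (h : T -> T) (R : pred T) :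
  injective h -> #|[set w | R (h w)]| = #|[set w | R w]|.
Proof.
move=> h_inj; rewrite -(card_preimset [set w | R w] h_inj).
by apply: eq_card => w; rewrite !inE.
Qed.

Lemma card_set_pair (T1 T2 : finType) (P : T1 -> T2 -> bool) :
  #|[set p | P p.1 p.2]| = (\sum_x #|[set y | P x y]|)%N.
Proof.
by under eq_bigr do rewrite -sum1dep_card; rewrite pair_big_dep sum1dep_card.
Qed.

Section Mx2.
Variable R : Type.

Definition mx2 (p : (R * R) * (R * R)) : 'M[R]_2 :=
  \matrix_(i, j) if i == j then (if i == 0 then p.1.1 else p.1.2)
                 else (if i == 0 then p.2.1 else p.2.2).

Definition entries2 (A : 'M[R]_2) : (R * R) * (R * R) :=
  ((A 0 0, A 1 1), (A 0 1, A 1 0)).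

Lemma mx2K : cancel mx2 entries2.
Proof. by move=> [[a d] [b c]]; rewrite /entries2 !mxE. Qed.

Lemma entries2K : cancel entries2 mx2.
Proof.
move=> A; apply/matrixP => i j; rewrite !mxE /=.
by case: i => [[|[|i]] Hi] //; case: j => [[|[|j]] Hj] //=;
   congr (A _ _); apply: val_inj.
Qed.

End Mx2.

Lemma det_mx2 (R : comNzRingType) (A : 'M[R]_2) :
  \det A = A 0 0 * A 1 1 - A 0 1 * A 1 0.
Proof.
rewrite (expand_det_row _ 0) !big_ord_recl big_ord0 /cofactor !det_mx11 !mxE /=.
rewrite addr0 expr0 expr1 mul1r mulN1r mulrN.
by congr (A _ _ * A _ _ - A _ _ * A _ _); apply: val_inj.
Qed.

Lemma mxtrace_mx2 (R : nzRingType) (A : 'M[R]_2) : \tr A = A 0 0 + A 1 1.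
Proof.
rewrite /mxtrace !big_ord_recl big_ord0 addr0.
by congr (A _ _ + A _ _); apply: val_inj.
Qed.

Lemma det_mx2_sub1 (R : comNzRingType) (A : 'M[R]_2) :
  \det (A - 1%:M) = \det A - \tr A + 1.
Proof. by rewrite !det_mx2 mxtrace_mx2 !mxE /=; ring. Qed.

Lemma det_mx2_sub_pid1 (R : comNzRingType) (A : 'M[R]_2) :
  \det (A - pid_mx 1) = \det A - A 1 1.
Proof. by rewrite !det_mx2 !mxE /=; ring. Qed.

Lemma sum_bool_card (T : finType) (b : pred T) :
  (\sum_x b x)%N = #|[set x | b x]|.
Proof.
by rewrite -sum1dep_card [RHS]big_mkcond; apply: eq_bigr => x _; case: (b x).
Qed.

Section FieldCounts.
Variable F : finFieldType.
Local Notation q := #|F|.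

Lemma card_mul_eq (t : F) :
  #|[set p : F * F | p.1 * p.2 == t]| = (q.-1 + (t == 0 :> F)%R * q)%N.
Proof.
rewrite (@card_set_pair _ _ (fun x y : F => x * y == t)) (bigD1 0) //= addnC.
congr (_ + _)%N.
  rewrite -(cardC1 (0 : F)) -sum1_card; apply: eq_bigr => x x0.
  rewrite -(cards1 (t / x)); apply: eq_card => y; rewrite !inE.
  by apply/eqP/eqP => [<-|->]; rewrite mulrC ?mulKf ?divfK.
have [->|t_neq0] := eqVneq t 0.
  by rewrite -cardsT /= mul1n; apply: eq_card => y; rewrite !inE mul0r eqxx.
by apply: eq_card0 => y; rewrite inE mul0r eq_sym (negPf t_neq0).
Qed.

Lemma card_det0_diag (P : F -> F -> bool) :
  #|[set A : 'M[F]_2 | (\det A == 0) && P (A 0 0) (A 1 1)]| =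
  (\sum_a \sum_(d | P a d) (q.-1 + (a * d == 0 :> F)%R * q))%N.
Proof.
rewrite -sum1dep_card (reindex (@mx2 F)) /=; last first.
  by exists (@entries2 F) => ? _; rewrite ?mx2K ?entries2K.
rewrite sum1dep_card.
set detP := fun x y : F * F => (x.1 * x.2 - y.1 * y.2 == 0) && P x.1 x.2.
rewrite (eq_card (B := [set p | detP p.1 p.2])) => [|p]; last first.
  by rewrite !inE det_mx2 !mxE.
rewrite (@card_set_pair _ _ detP) pair_big_dep [RHS]big_mkcond.
apply: eq_bigr => -[a d] _; rewrite /detP /=.
case: (P a d); last by apply: eq_card0 => y; rewrite !inE andbF.
rewrite -card_mul_eq; apply: eq_card => y.
by rewrite !inE andbT subr_eq0 eq_sym.
Qed.

Lemma card_nonunitmx_sub1 :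
  #|[set A : 'M[F]_2 | (A \notin unitmx) && (A - 1%:M \notin unitmx)]| =
  (q * q.-1 + 2 * q)%N.
Proof.
rewrite (eq_card
  (B := [set A | (\det A == 0) && (A 0 0 + A 1 1 == 1)])); last first.
  move=> A; rewrite !inE !unitmxE !unitfE !negbK det_mx2_sub1 mxtrace_mx2.
  by case: eqP => // ->; rewrite sub0r addrC subr_eq0 eq_sym.
rewrite (card_det0_diag (fun a d => a + d == 1)).
under eq_bigr => a _.
  rewrite (eq_bigl (pred1 (1 - a))) => [|d]; last first.
    by rewrite /= [RHS]eq_sym subr_eq eq_sym addrC.
  rewrite big_pred1_eq.
  over.
rewrite big_split sum_nat_const cardT /= -cardE -big_distrl sum_bool_card /=.
have -> : #|[set a : F | a * (1 - a) == 0]| = 2%N.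
  have -> : 2%N = #|[set (0 : F); 1]| by rewrite cards2 eq_sym oner_neq0.
  by apply: eq_card => a; rewrite !inE mulf_eq0 subr_eq0 (eq_sym 1).
by rewrite addnC.
Qed.

Lemma card_nonunitmx_sub_pid1 :
  #|[set A : 'M[F]_2 | (A \notin unitmx) && (A - pid_mx 1 \notin unitmx)]| =
  (q * (q.-1 + q))%N.
Proof.
rewrite (eq_card (B := [set A | (\det A == 0) && (A 1 1 == 0)])); last first.
  move=> A; rewrite !inE !unitmxE !unitfE !negbK det_mx2_sub_pid1.
  by case: eqP => // ->; rewrite sub0r oppr_eq0.
rewrite (card_det0_diag (fun _ d => d == 0)).
under eq_bigr do rewrite big_pred1_eq mulr0 eqxx mul1n.
by rewrite sum_nat_const cardT /= -cardE.
Qed.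

Lemma card_unitmx2 :
  #|[set A : 'M[F]_2 | A \in unitmx]| = (q * q.-1 ^ 2 * q.+1)%N.
Proof.
by rewrite -card_GL_2 cardsT /= card_sub; apply: eq_card => A; rewrite inE.
Qed.

End FieldCounts.

Section CommonUnits.
Variables (F : finFieldType) (n : nat).

Definition common_units (D : 'M[F]_n) :=
  #|[set w : 'M[F]_n | (w \in unitmx) && (w - D \in unitmx)]|.

Lemma common_units_incl_excl (D : 'M[F]_n) :
  (common_units D + #|{: 'M[F]_n}| =
   2 * #|[set w : 'M[F]_n | w \in unitmx]| +
   #|[set w : 'M[F]_n | (w \notin unitmx) && ((w - D)%R \notin unitmx)]|)%N.
Proof.
set U := [set w : 'M[F]_n | w \in unitmx].
set V := [set w : 'M[F]_n | w - D \in unitmx].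
have cardV : #|V| = #|U|.
  exact: (card_preim_inj (fun w => w \in unitmx) (addIr (- D))).
have -> : common_units D = #|U :&: V| by apply: eq_card => w; rewrite !inE.
have -> : #|[set w | (w \notin unitmx) && (w - D \notin unitmx)]| =
          #|~: (U :|: V)| by apply: eq_card => w; rewrite !inE negb_or.
have := cardsUI U V; have := cardsC (U :|: V); rewrite cardV => <-; lia.
Qed.

Lemma common_units_equiv (P D Q : 'M[F]_n) :
  P \in unitmx -> Q \in unitmx -> common_units (P *m D *m Q) = common_units D.
Proof.
move=> uP uQ; have PQ_inj : injective (fun w : 'M[F]_n => P *m w *m Q).
  move=> w1 w2 /(congr1 (mulmx^~ (invmx Q))); rewrite !mulmxK //.
  by move/(congr1 (mulmx (invmx P))); rewrite !mulKmx.
rewrite /common_units -(card_preim_inj _ PQ_inj); apply: eq_card => w.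
by rewrite !inE -mulmxBl -mulmxBr !unitmx_mul uP uQ !andbT.
Qed.

Lemma common_units_rank (D : 'M[F]_n) :
  common_units D = common_units (pid_mx (\rank D)).
Proof.
rewrite -{1}(mulmx_ebase D).
by rewrite common_units_equiv ?col_ebase_unit ?row_ebase_unit.
Qed.

End CommonUnits.

Section UnitGraph.
Variable F : finFieldType.

Lemma card_unit_graph_nbhd (x : 'M[F]_2) :
  #|[set y | unit_graph x y]| = #|[set A : 'M[F]_2 | A \in unitmx]|.
Proof. exact: (card_preim_inj (fun A => A \in unitmx) (addIr (- x))). Qed.

Lemma card_unit_graph_common (x y : 'M[F]_2) :
  #|[set z | unit_graph x z && unit_graph y z]| = common_units (y - x).
Proof.
rewrite /common_units -[RHS](card_preim_inj _ (addIr (- x))).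
by apply: eq_card => z; rewrite !inE /unit_graph opprB addrA subrK.
Qed.

Lemma rank_mx2_nonunit (D : 'M[F]_2) :
  D != 0 -> D \notin unitmx -> \rank D = 1%N.
Proof.
rewrite -mxrank_eq0 -row_free_unit /row_free => rank_neq0 rank_neq2.
by have := rank_leq_row D; case: (\rank D) rank_neq0 rank_neq2 => [|[|[|]]].
Qed.

Lemma unit_graph_strongly_regular :
  strongly_regular (@unit_graph F) #|{: 'M[F]_2}|
    #|[set A : 'M[F]_2 | A \in unitmx]|
    (common_units (1%:M : 'M[F]_2)) (common_units (pid_mx 1 : 'M[F]_2)).
Proof.
have pid1_nonunit : pid_mx 1 \notin (unitmx : {pred 'M[F]_2}).
  by rewrite -row_free_unit /row_free rank_pid_mx.
split; split => //.
- by exists 0, 1%:M; rewrite /unit_graph subr0; apply: unitmx1.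
- exists 0, (pid_mx 1); split; last by rewrite /unit_graph subr0.
  by apply/eqP => /(congr1 mxrank); rewrite mxrank0 rank_pid_mx.
- exact: card_unit_graph_nbhd.
- move=> x y _ xy; rewrite card_unit_graph_common common_units_rank.
  by rewrite mxrank_unit // pid_mx_1.
- move=> x y x_neq_y not_xy; rewrite card_unit_graph_common common_units_rank.
  by rewrite rank_mx2_nonunit // subr_eq0 eq_sym.
Qed.

End UnitGraph.

Theorem theorem3p5 (F : finFieldType) :
  let q : int := (#|F|)%:Z in
  exists n k a c : nat,
    [/\ n%:Z = q ^+ 4,
        k%:Z = q ^+ 4 - q ^+ 3 - q ^+ 2 + q,
        a%:Z = q ^+ 4 - 2 * q ^+ 3 - q ^+ 2 + 3 * q,
        c%:Z = q ^+ 4 - 2 * q ^+ 3 + q &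
        strongly_regular (@unit_graph F) n k a c].
Proof.
move=> q; exists #|{: 'M[F]_2}|, #|[set A : 'M[F]_2 | A \in unitmx]|,
  (common_units (1%:M : 'M[F]_2)), (common_units (pid_mx 1 : 'M[F]_2)).
have q_gt0 : (0 < #|F|)%N by apply/card_gt0P; exists 0.
have n_eq : #|{: 'M[F]_2}| = (#|F| ^ 4)%N by rewrite card_mx.
have k_eq := card_unitmx2 F.
have a_eq := common_units_incl_excl (1%:M : 'M[F]_2).
have c_eq := common_units_incl_excl (pid_mx 1 : 'M[F]_2).
rewrite card_nonunitmx_sub1 k_eq n_eq in a_eq.
rewrite card_nonunitmx_sub_pid1 k_eq n_eq in c_eq.
split; last exact: unit_graph_strongly_regular.
all: rewrite ?n_eq ?k_eq /q !exprS expr0 !mulr1; nia.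
Qed.
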